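(* For every $x\in(0,1/2]$, $$4x(1-x)\log_2\!\left(\frac{1}{x(1-x)}\right)\ \ge\ x\,G(1/x)\ \ge\ x(1-x)\left(4+\log\frac{1}{4x(1-x)}\right),$$ $$2x\log_2(1/x)\ \ge\ x\,G(1/x)\ \ge\ x\left(2+\log\frac{1}{2x}\right),$$ and $\displaystyle\lim_{x\to0^+}\frac{G(1/x)}{\log(1/x)}=1$.
   Context: $\log$ is the natural logarithm. $G:[2,\infty)\to\mathbb{R}$ is defined by $G(2)=2$ and, for $x\in(0,1/2)$, $G(1/x)=\dfrac{\gamma^2e^{\gamma}}{e^{\gamma}(\gamma-1)+1}$, where $\gamma>0$ is the unique solution of $x=\dfrac{e^{\gamma}(\gamma-1)+1}{(e^{\gamma}-1)^2}$. *)

From Stdlib Require Import Reals ClassicalEpsilon.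
From Coquelicot Require Import Coquelicot.
Open Scope R_scope.

Definition phi (g : R) : R := (exp g * (g - 1) + 1) / (exp g - 1) ^ 2.

(* For x in (0,1/2), the unique gamma > 0 with x = phi gamma (chosen by epsilon). *)
Definition gamma_of (x : R) : R :=
  epsilon (inhabits 0) (fun g => 0 < g /\ x = phi g).

Definition G (y : R) : R :=
  if Req_EM_T y 2 then 2
  else let g := gamma_of (1 / y) in
       g ^ 2 * exp g / (exp g * (g - 1) + 1).

Definition log2 (t : R) : R := ln t / ln 2.

(* Write [x = phi g]. Each inequality, expressed in terms of [g], states that an
   explicit "slack" function of [g] built from [exp g], [g] and logarithms is
   nonnegative on (0, +oo). Such a slack function is at least [- C g] near [0], and
   its derivative is a positive factor times an exponential polynomial
   [sum a t^i e^(j t)] whose Taylor coefficients at [0] are all nonnegative; so it is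
   nondecreasing, hence nonnegative. Three slack functions suffice: the upper bound
   [G (1/x) <= 2 + 5/2 ln (1/(2x))] implies both upper bounds of the statement.
   For the limit, [ln (1/x) < G (1/x)] by the lower bound, while
   [G (1/x) <= g^2/(g-1)] and [ln (1/x) >= g - 2 ln 2 - ln g], and [g -> +oo] as
   [x -> 0]. *)

From Stdlib Require Import Reals Lra Lia List Factorial ClassicalEpsilon.
From Coquelicot Require Import Coquelicot.
Import ListNotations.
Open Scope R_scope.

(** * Taylor series of exponential polynomials *)

Fixpoint falling (n i : nat) : R :=
  match i with O => 1 | S i' => (INR n - INR i') * falling n i' end.

Lemma falling_gt (n i : nat) : (n < i)%nat -> falling n i = 0.
Proof.
  revert n; induction i as [|i IH]; intros n Hni; [lia|].
  simpl; destruct (Nat.eq_dec n i) as [->|Hne]; [ring|].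
  rewrite IH by lia; ring.
Qed.

Lemma falling_fact (n i : nat) :
  (i <= n)%nat -> falling n i * INR (fact (n - i)) = INR (fact n).
Proof.
  revert n; induction i as [|i IH]; intros n Hin.
  - simpl; rewrite Nat.sub_0_r; ring.
  - simpl falling; rewrite <- (IH n) by lia.
    replace (n - i)%nat with (S (n - S i)) by lia.
    rewrite fact_simpl, mult_INR, S_INR, minus_INR, S_INR by lia; ring.
Qed.

(* Stating [is_series_ext] at [R] keeps the carrier of [R_NormedModule] out of the
   goals, where it would block [field]. *)
Lemma is_series_ext_R (a b : nat -> R) (l : R) :
  (forall n, a n = b n) -> is_series a l -> is_series b l.
Proof. apply is_series_ext. Qed.

Lemma is_series_zero : is_series (fun _ => 0) 0.
Proof.
  pose proof (is_series_scal (K:=R_AbsRing) (V:=R_NormedModule) 0 _ _ (is_exp_Reals 0)) as H.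
  unfold scal in H; simpl in H; unfold mult in H; simpl in H; rewrite Rmult_0_l in H.
  eapply is_series_ext_R; [|exact H]; intros n; apply Rmult_0_l.
Qed.

(* [n!] times the [n]-th Taylor coefficient of [t ^ i * exp (j * t)] at [0]. *)
Definition monomial_coef (i : nat) (j : R) (n : nat) : R := falling n i * j ^ (n - i).

Lemma is_series_pow_exp (i : nat) (j t : R) :
  is_series (fun n => monomial_coef i j n / INR (fact n) * t ^ n) (t ^ i * exp (j * t)).
Proof.
  assert (Hexp : is_series (fun k => t ^ i * ((j * t) ^ k * / INR (fact k)))
                   (t ^ i * exp (j * t))).
  { pose proof (is_series_scal (K:=R_AbsRing) (V:=R_NormedModule) (t ^ i) _ _
                  (is_exp_Reals (j * t))) as H.
    eapply is_series_ext_R; [|exact H]; reflexivity. }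
  destruct i as [|i].
  - eapply is_series_ext_R; [|exact Hexp]; intros n.
    unfold monomial_coef; simpl; rewrite Nat.sub_0_r, Rpow_mult_distr.
    field; apply INR_fact_neq_0.
  - apply (is_series_decr_n _ (S i)); [lia|].
    match goal with |- is_series _ ?l => replace l with (t ^ S i * exp (j * t)) end.
    2:{ unfold plus, opp; simpl; rewrite sum_n_Reals, sum_eq_R0; [simpl; ring|].
        intros k Hk; unfold monomial_coef; rewrite falling_gt by lia; unfold Rdiv; ring. }
    eapply is_series_ext_R; [|exact Hexp]; intros n.
    assert (Hf := falling_fact (S i + n) (S i) ltac:(lia)).
    replace (S i + n - S i)%nat with n in Hf by lia.
    assert (Hnz : falling (S i + n) (S i) <> 0).
    { intros Hz; rewrite Hz, Rmult_0_l in Hf; symmetry in Hf; revert Hf; apply INR_fact_neq_0. }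
    unfold monomial_coef; replace (S i + n - S i)%nat with n by lia.
    rewrite pow_add, Rpow_mult_distr, <- Hf.
    field; split; [apply INR_fact_neq_0|exact Hnz].
Qed.

(* [(a, i, j)] stands for the term [a * t ^ i * exp (j * t)]. *)
Definition exp_poly := list (R * nat * R).

Fixpoint exp_poly_eval (p : exp_poly) (t : R) : R :=
  match p with
  | [] => 0
  | (a, i, j) :: p' => a * (t ^ i * exp (j * t)) + exp_poly_eval p' t
  end.

Fixpoint exp_poly_coef (p : exp_poly) (n : nat) : R :=
  match p with
  | [] => 0
  | (a, i, j) :: p' => a * monomial_coef i j n + exp_poly_coef p' n
  end.

Lemma is_series_exp_poly (p : exp_poly) (t : R) :
  is_series (fun n => exp_poly_coef p n / INR (fact n) * t ^ n) (exp_poly_eval p t).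
Proof.
  induction p as [|[[a i] j] p IH]; simpl.
  - eapply is_series_ext_R; [|exact is_series_zero]; intros n.
    unfold Rdiv; ring.
  - pose proof (is_series_scal (K:=R_AbsRing) (V:=R_NormedModule) a _ _
                  (is_series_pow_exp i j t)) as Hmon.
    eapply is_series_ext_R; [|exact (is_series_plus _ _ _ _ Hmon IH)]; intros n.
    unfold plus, scal; simpl; unfold mult; simpl.
    field; apply INR_fact_neq_0.
Qed.

Lemma exp_poly_eval_nonneg (p : exp_poly) (t : R) :
  0 <= t -> (forall n, 0 <= exp_poly_coef p n) -> 0 <= exp_poly_eval p t.
Proof.
  intros Ht Hcoef.
  apply (is_lim_seq_le (fun _ => 0) (sum_n (fun n => exp_poly_coef p n / INR (fact n) * t ^ n))
           0 (exp_poly_eval p t)).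
  - intros n; rewrite sum_n_Reals; apply cond_pos_sum; intros k.
    apply Rmult_le_pos; [|apply pow_le; exact Ht].
    apply Rdiv_le_0_compat; [apply Hcoef|apply INR_fact_lt_0].
  - apply is_lim_seq_const.
  - apply is_series_exp_poly.
Qed.

(* With [x = phi g]: [x = Nf g / Kf g ^ 2], [1 - x = exp g * Mf g / Kf g ^ 2]
   and [G (1 / x) = G_gamma g]. *)
Definition Kf (t : R) : R := exp t - 1.
Definition Mf (t : R) : R := exp t - 1 - t.
Definition Nf (t : R) : R := exp t * (t - 1) + 1.
Definition G_gamma (g : R) : R := g ^ 2 * exp g / Nf g.

Lemma exp_0_mul t : exp (0 * t) = 1.
Proof. rewrite Rmult_0_l; apply exp_0. Qed.
Lemma exp_1_mul t : exp (1 * t) = exp t.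
Proof. rewrite Rmult_1_l; reflexivity. Qed.
Lemma exp_2_mul t : exp (2 * t) = exp t * exp t.
Proof. rewrite <- exp_plus; f_equal; ring. Qed.
Lemma exp_m1_mul t : exp (-1 * t) = / exp t.
Proof. rewrite <- exp_Ropp; f_equal; ring. Qed.
Lemma exp_m2_mul t : exp (-2 * t) = / (exp t * exp t).
Proof. rewrite <- exp_plus, <- exp_Ropp; f_equal; ring. Qed.

Tactic Notation "simpl_exp" :=
  rewrite ?exp_0_mul, ?exp_1_mul, ?exp_2_mul, ?exp_m1_mul, ?exp_m2_mul.
Tactic Notation "simpl_exp" "in" hyp(H) :=
  rewrite ?exp_0_mul, ?exp_1_mul, ?exp_2_mul, ?exp_m1_mul, ?exp_m2_mul in H.

Ltac expand_coef :=
  cbn -[INR]; unfold monomial_coef; cbn -[INR]; rewrite ?pow1, ?S_INR, ?INR_0.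

Ltac solve_exp_poly_nonneg :=
  apply exp_poly_eval_nonneg; [assumption|];
  let m := fresh "m" in
  intros [|[|[|m]]]; expand_coef; [simpl; lra..|];
  pose proof (pos_INR m); nra.

(* Proves [lhs <= rhs] at [t >= 0] from a certificate [p] with nonnegative Taylor
   coefficients whose value is [rhs - lhs]. *)
Ltac by_exp_poly p :=
  match goal with Ht : 0 <= ?t |- _ =>
    let Hp := fresh "Hp" in
    assert (Hp : 0 <= exp_poly_eval p t) by solve_exp_poly_nonneg;
    simpl in Hp; simpl_exp in Hp; unfold Kf, Mf, Nf; lra
  end.

Lemma Kf_ge t : t <= Kf t.
Proof. pose proof (exp_ineq1_le t); unfold Kf; lra. Qed.

Lemma Kf_le t : Kf t <= t * exp t.
Proof.
  pose proof (exp_ineq1_le (- t)) as H; rewrite exp_Ropp in H.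
  pose proof (exp_pos t); unfold Kf.
  apply Rmult_le_compat_r with (r := exp t) in H; [|lra].
  rewrite Rinv_l in H by lra; nra.
Qed.

Lemma Kf_le_quadratic t : 0 <= t -> Kf t <= t + t ^ 2 * exp t.
Proof. intros Ht; by_exp_poly [(1,1%nat,0); (1,2%nat,1); (-1,0%nat,1); (1,0%nat,0)]. Qed.

Lemma Mf_ge t : 0 <= t -> t ^ 2 / 2 <= Mf t.
Proof. intros Ht; by_exp_poly [(1,0%nat,1); (-1,0%nat,0); (-1,1%nat,0); (-1/2,2%nat,0)]. Qed.

Lemma Mf_le t : 0 <= t -> Mf t <= t ^ 2 / 2 + t ^ 3 * exp t.
Proof.
  intros Ht; by_exp_poly [(1/2,2%nat,0); (1,3%nat,1); (-1,0%nat,1); (1,0%nat,0); (1,1%nat,0)].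
Qed.

Lemma Nf_ge t : 0 <= t -> t ^ 2 / 2 <= Nf t.
Proof. intros Ht; by_exp_poly [(1,1%nat,1); (-1,0%nat,1); (1,0%nat,0); (-1/2,2%nat,0)]. Qed.

Lemma Nf_le t : 0 <= t -> Nf t <= t ^ 2 / 2 + t ^ 3 * exp t.
Proof.
  intros Ht; by_exp_poly [(1/2,2%nat,0); (1,3%nat,1); (-1,1%nat,1); (1,0%nat,1); (-1,0%nat,0)].
Qed.

Lemma exp_mul_sub2_ge t : 0 <= t -> 0 <= exp t * (t - 2) + t + 2.
Proof. intros Ht; by_exp_poly [(1,1%nat,1); (-2,0%nat,1); (1,1%nat,0); (2,0%nat,0)]. Qed.

Lemma Kf_pos t : 0 < t -> 0 < Kf t.
Proof. intros; pose proof (Kf_ge t); lra. Qed.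

Lemma Mf_pos t : 0 < t -> 0 < Mf t.
Proof. intros; pose proof (Mf_ge t); pose proof (pow_lt t 2); lra. Qed.

Lemma Nf_pos t : 0 < t -> 0 < Nf t.
Proof. intros; pose proof (Nf_ge t); pose proof (pow_lt t 2); lra. Qed.

Lemma nonneg_of_derive_nonneg (f df : R -> R) (C b : R) : 0 < b -> 0 <= C ->
  (forall t, 0 < t -> is_derive f t (df t)) ->
  (forall t, 0 < t -> 0 <= df t) ->
  (forall t, 0 < t < 1 -> - C * t <= f t) ->
  0 <= f b.
Proof.
  intros Hb HC Hd Hdf Hnear0.
  destruct (Rle_lt_dec 0 (f b)) as [H|Hneg]; [exact H|exfalso].
  (* [f] would increase from [f t], nearly [0], to [f b < 0] *)
  set (t := Rmin (Rmin (b / 2) (1 / 2)) (- f b / (2 * (C + 1)))).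
  assert (Ht0 : 0 < t).
  { unfold t; repeat apply Rmin_glb_lt; try lra; apply Rdiv_lt_0_compat; lra. }
  assert (Htb : t <= b / 2) by (unfold t; eapply Rle_trans; [apply Rmin_l|apply Rmin_l]).
  assert (Ht1 : t <= 1 / 2) by (unfold t; eapply Rle_trans; [apply Rmin_l|apply Rmin_r]).
  assert (HCt : C * t <= - f b / 2).
  { assert (Htf : t <= - f b / (2 * (C + 1))) by apply Rmin_r.
    apply Rmult_le_compat_l with (r := C + 1) in Htf; [|lra].
    replace ((C + 1) * (- f b / (2 * (C + 1)))) with (- f b / 2) in Htf by (field; lra).
    nra. }
  assert (Hft : - C * t <= f t) by (apply Hnear0; lra).
  destruct (MVT_gen f t b df) as [c [Hc Heq]].
  - intros x Hx; apply Hd; rewrite Rmin_left in Hx by lra; lra.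
  - intros x Hx; rewrite Rmin_left in Hx by lra; rewrite Rmax_right in Hx by lra.
    apply continuity_pt_filterlim, (ex_derive_continuous f); exists (df x); apply Hd; lra.
  - rewrite Rmin_left in Hc by lra; rewrite Rmax_right in Hc by lra.
    assert (0 <= df c * (b - t)) by (apply Rmult_le_pos; [apply Hdf|]; lra).
    lra.
Qed.

Lemma ln_le_sub1 y : 0 < y -> ln y <= y - 1.
Proof. intros Hy; pose proof (exp_ineq1_le (ln y)); rewrite exp_ln in H by lra; lra. Qed.

Lemma exp_le_3_of_le_1 t : t <= 1 -> exp t <= 3.
Proof.
  intros Ht; pose proof exp_le_3.
  destruct (Req_dec t 1) as [->|]; [lra|].
  pose proof (exp_increasing t 1 ltac:(lra)); lra.
Qed.

Lemma ln_inv_nonneg y : 0 < y <= 1 -> 0 <= ln (1 / y).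
Proof. intros Hy; rewrite ln_div, ln_1 by lra; pose proof (ln_le y 1 ltac:(lra) ltac:(lra)).
  rewrite ln_1 in *; lra. Qed.

Lemma ln_sq_half t : 0 < t -> ln (t ^ 2 / 2) = 2 * ln t - ln 2.
Proof. intros Ht; rewrite ln_div, ln_pow by (try apply pow_lt; lra); simpl; ring. Qed.

Lemma ln_4 : ln 4 = 2 * ln 2.
Proof. replace 4 with (2 * 2) by ring; rewrite ln_mult by lra; ring. Qed.

Lemma ln_2_pos : 0 < ln 2.
Proof. rewrite <- ln_1; apply ln_increasing; lra. Qed.

Lemma ln_2_le : ln 2 <= 4 / 5.
Proof.
  pose proof (Mf_ge (4 / 5) ltac:(lra)); unfold Mf in H.
  rewrite <- (ln_exp (4 / 5)); apply ln_le; [lra|]; simpl in H; lra.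
Qed.

Definition ln_inv_2phi (g : R) : R := 2 * ln (Kf g) - ln 2 - ln (Nf g).

Lemma phi_Kf_Nf g : phi g = Nf g / Kf g ^ 2.
Proof. reflexivity. Qed.

Lemma one_sub_phi g : 0 < g -> 1 - phi g = exp g * Mf g / Kf g ^ 2.
Proof.
  intros Hg; pose proof (Kf_pos g Hg); rewrite phi_Kf_Nf.
  unfold Nf, Mf, Kf in *; field; lra.
Qed.

Lemma ln_inv_phi g : 0 < g -> ln (1 / phi g) = 2 * ln (Kf g) - ln (Nf g).
Proof.
  intros Hg; pose proof (Kf_pos g Hg); pose proof (Nf_pos g Hg).
  rewrite phi_Kf_Nf, ln_div, ln_1, ln_div, ln_pow by (try apply Rdiv_lt_0_compat;
    try apply pow_lt; lra).
  simpl; ring.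
Qed.

Lemma ln_inv_2phi_eq g : 0 < g -> ln (1 / (2 * phi g)) = ln_inv_2phi g.
Proof.
  intros Hg; pose proof (Kf_pos g Hg); pose proof (Nf_pos g Hg).
  assert (Hphi : 0 < phi g) by (rewrite phi_Kf_Nf; apply Rdiv_lt_0_compat; [|apply pow_lt]; lra).
  replace (1 / (2 * phi g)) with (1 / phi g / 2) by (field; lra).
  rewrite ln_div, ln_inv_phi by (try apply Rdiv_lt_0_compat; lra).
  unfold ln_inv_2phi; ring.
Qed.

Lemma ln_inv_2phi_le t : 0 < t < 1 -> ln_inv_2phi t <= 6 * t.
Proof.
  intros Ht; unfold ln_inv_2phi.
  pose proof (Kf_pos t ltac:(lra)); pose proof (Nf_pos t ltac:(lra)).
  pose proof (Kf_le_quadratic t ltac:(lra)); pose proof (Nf_ge t ltac:(lra)).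
  pose proof (exp_le_3_of_le_1 t ltac:(lra)).
  assert (HK : ln (Kf t) <= ln t + ln (1 + 3 * t)).
  { rewrite <- ln_mult by lra; apply ln_le; [lra|nra]. }
  assert (HN : ln (t ^ 2 / 2) <= ln (Nf t)) by (apply ln_le; [pose proof (pow_lt t 2)|]; lra).
  rewrite ln_sq_half in HN by lra.
  pose proof (ln_le_sub1 (1 + 3 * t) ltac:(lra)); lra.
Qed.

Lemma ln_inv_2phi_ge t : 0 < t < 1 -> - 6 * t <= ln_inv_2phi t.
Proof.
  intros Ht; unfold ln_inv_2phi.
  pose proof (Kf_pos t ltac:(lra)); pose proof (Nf_pos t ltac:(lra)).
  pose proof (Kf_ge t); pose proof (Nf_le t ltac:(lra)).
  pose proof (exp_le_3_of_le_1 t ltac:(lra)).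
  assert (HN : Nf t <= t ^ 2 / 2 * (1 + 6 * t)).
  { pose proof (pow_le t 3 ltac:(lra)); simpl in *; nra. }
  assert (HK : ln t <= ln (Kf t)) by (apply ln_le; lra).
  assert (HN' : ln (Nf t) <= ln (t ^ 2 / 2) + ln (1 + 6 * t)).
  { rewrite <- ln_mult by (try pose proof (pow_lt t 2); lra).
    apply ln_le; lra. }
  rewrite ln_sq_half in HN' by lra.
  pose proof (ln_le_sub1 (1 + 6 * t) ltac:(lra)); lra.
Qed.

(** * The slack functions *)

Lemma pow2_ge_succ (m : nat) : 1 + INR m <= 2 ^ m.
Proof. pose proof (poly m 1 ltac:(lra)); replace (1 + 1) with 2 in H by ring; lra. Qed.

(* At [x = phi g]: [G (1 / x) - 2 - ln (1 / (2 x))]. *)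
Definition slack_lower (g : R) : R := G_gamma g - 2 - ln_inv_2phi g.

Definition slack_lower_certificate : exp_poly :=
  [(-2,0%nat,2); (1,1%nat,2); (4,0%nat,1); (2,1%nat,1); (-1,2%nat,1);
   (-2,0%nat,0); (-3,1%nat,0); (-1,2%nat,0)].

Lemma slack_lower_certificate_coef n : 0 <= exp_poly_coef slack_lower_certificate n.
Proof.
  destruct n as [|[|[|m]]]; unfold slack_lower_certificate; expand_coef; [simpl; lra..|].
  destruct m as [|m]; [simpl; lra|].
  pose proof (pow2_ge_succ (S m)); rewrite !S_INR in *; simpl pow in *.
  pose proof (pos_INR m).
  assert (0 <= INR m * (4 * (2 * 2 ^ m) - INR m - 5)) by (apply Rmult_le_pos; lra).
  nra.
Qed.

Lemma slack_lower_derive t : 0 < t ->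
  is_derive slack_lower t
    (exp t * exp_poly_eval slack_lower_certificate t / (Nf t ^ 2 * Kf t)).
Proof.
  intros Ht; pose proof (Kf_pos t Ht); pose proof (Nf_pos t Ht).
  unfold slack_lower, ln_inv_2phi, G_gamma; unfold Kf, Nf in *; auto_derive.
  - repeat split; lra.
  - simpl; simpl_exp; field; repeat split; lra.
Qed.

Lemma slack_lower_ge_linear t : 0 < t < 1 -> - 30 * t <= slack_lower t.
Proof.
  intros Ht; unfold slack_lower.
  pose proof (ln_inv_2phi_le t Ht); pose proof (Nf_pos t ltac:(lra)).
  pose proof (Nf_le t ltac:(lra)); pose proof (exp_le_3_of_le_1 t ltac:(lra)).
  pose proof (exp_ineq1_le t).
  assert (2 - 12 * t <= G_gamma t); [|lra].
  unfold G_gamma; apply Rle_trans with (t ^ 2 / Nf t).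
  - apply Rmult_le_reg_r with (Nf t); [lra|].
    unfold Rdiv; rewrite Rmult_assoc, Rinv_l, Rmult_1_r by lra.
    pose proof (pow_le t 3 ltac:(lra)); simpl in *; nra.
  - unfold Rdiv; apply Rmult_le_compat_r; [left; apply Rinv_0_lt_compat; lra|].
    pose proof (pow_le t 2 ltac:(lra)); nra.
Qed.

Lemma slack_lower_nonneg g : 0 < g -> 0 <= slack_lower g.
Proof.
  intros Hg.
  apply (nonneg_of_derive_nonneg slack_lower
           (fun t => exp t * exp_poly_eval slack_lower_certificate t / (Nf t ^ 2 * Kf t))
           30 g Hg); [lra|apply slack_lower_derive| |].
  - intros t Ht; pose proof (Kf_pos t Ht); pose proof (Nf_pos t Ht).
    apply Rdiv_le_0_compat.
    + apply Rmult_le_pos; [apply Rlt_le, exp_pos|].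
      apply exp_poly_eval_nonneg; [lra|apply slack_lower_certificate_coef].
    + apply Rmult_lt_0_compat; [apply pow_lt|]; lra.
  - intros t Ht; apply slack_lower_ge_linear; lra.
Qed.

(* At [x = phi g]: [2 + 5/2 ln (1 / (2 x)) - G (1 / x)]. *)
Definition slack_upper (g : R) : R := 2 - G_gamma g + 5 / 2 * ln_inv_2phi g.

Definition slack_upper_certificate : exp_poly :=
  [(10,0%nat,0); (9,1%nat,0); (2,2%nat,0); (-20,0%nat,1); (2,1%nat,1); (5,2%nat,1);
   (10,0%nat,2); (-11,1%nat,2); (3,2%nat,2)].

Lemma slack_upper_certificate_coef n : 0 <= exp_poly_coef slack_upper_certificate n.
Proof.
  destruct n as [|[|[|[|[|[|[|m]]]]]]]; unfold slack_upper_certificate; expand_coef;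
    [simpl; lra..|].
  pose proof (pos_INR m); pose proof (pow_le 2 m ltac:(lra)); nra.
Qed.

Lemma slack_upper_derive t : 0 < t ->
  is_derive slack_upper t
    (exp t * exp_poly_eval slack_upper_certificate t / (2 * Nf t ^ 2 * Kf t)).
Proof.
  intros Ht; pose proof (Kf_pos t Ht); pose proof (Nf_pos t Ht).
  unfold slack_upper, ln_inv_2phi, G_gamma; unfold Kf, Nf in *; auto_derive.
  - repeat split; lra.
  - simpl; simpl_exp; field; repeat split; lra.
Qed.

Lemma slack_upper_ge_linear t : 0 < t < 1 -> - 30 * t <= slack_upper t.
Proof.
  intros Ht; unfold slack_upper.
  pose proof (ln_inv_2phi_ge t Ht); pose proof (Nf_pos t ltac:(lra)).
  pose proof (Nf_ge t ltac:(lra)); pose proof (exp_le_3_of_le_1 t ltac:(lra)).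
  pose proof (Kf_le_quadratic t ltac:(lra)) as HK; unfold Kf in HK.
  assert (G_gamma t <= 2 + 8 * t); [|lra].
  unfold G_gamma; apply Rmult_le_reg_r with (Nf t); [lra|].
  unfold Rdiv; rewrite Rmult_assoc, Rinv_l, Rmult_1_r by lra.
  pose proof (pow_le t 2 ltac:(lra)).
  assert (exp t <= 1 + 4 * t) by nra.
  assert (0 <= (2 + 8 * t) * (Nf t - t ^ 2 / 2)) by (apply Rmult_le_pos; lra).
  assert (0 <= t ^ 2 * (1 + 4 * t - exp t)) by (apply Rmult_le_pos; lra).
  nra.
Qed.

Lemma slack_upper_nonneg g : 0 < g -> 0 <= slack_upper g.
Proof.
  intros Hg.
  apply (nonneg_of_derive_nonneg slack_upper
           (fun t => exp t * exp_poly_eval slack_upper_certificate t / (2 * Nf t ^ 2 * Kf t))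
           30 g Hg); [lra|apply slack_upper_derive| |].
  - intros t Ht; pose proof (Kf_pos t Ht); pose proof (Nf_pos t Ht).
    apply Rdiv_le_0_compat.
    + apply Rmult_le_pos; [apply Rlt_le, exp_pos|].
      apply exp_poly_eval_nonneg; [lra|apply slack_upper_certificate_coef].
    + pose proof (pow_lt (Nf t) 2 ltac:(lra)); apply Rmult_lt_0_compat; lra.
  - intros t Ht; apply slack_upper_ge_linear; lra.
Qed.

Lemma pow2_ge_binomial_sum (m : nat) :
  1 + INR m + INR m * (INR m - 1) / 2 + INR m * (INR m - 1) * (INR m - 2) / 6
  + INR m * (INR m - 1) * (INR m - 2) * (INR m - 3) / 24 <= 2 ^ m.
Proof.
  induction m as [|m IH]; [simpl; lra|].
  destruct m as [|[|[|m]]]; [simpl; lra..|].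
  set (k := S (S (S m))) in *.
  assert (Hk : 3 <= INR k) by (unfold k; rewrite !S_INR; pose proof (pos_INR m); lra).
  assert (0 <= INR k * (INR k - 1) * (INR k - 2) * (INR k - 3))
    by (repeat apply Rmult_le_pos; lra).
  rewrite S_INR; change (2 ^ S k) with (2 * 2 ^ k); nra.
Qed.

(* At [x = phi g]: [G (1 / x) / (1 - x) - 4 - ln (1 / (4 x (1 - x)))]. *)
Definition slack_lower_sym (g : R) : R :=
  g ^ 2 * Kf g ^ 2 / (Nf g * Mf g) - 4 + ln 4 + ln (Nf g) + g + ln (Mf g) - 4 * ln (Kf g).

Definition slack_lower_sym_certificate : exp_poly :=
  [(1,0%nat,2); (-1,0%nat,-2); (-2,0%nat,1); (2,0%nat,-1); (12,1%nat,0); (-6,1%nat,1);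
   (-6,1%nat,-1); (3,2%nat,1); (-3,2%nat,-1); (-1,3%nat,1); (-1,3%nat,-1)].

Lemma slack_lower_sym_certificate_coef n : 0 <= exp_poly_coef slack_lower_sym_certificate n.
Proof.
  destruct n as [|[|[|[|m]]]]; unfold slack_lower_sym_certificate; expand_coef;
    [simpl; lra..|].
  assert (Hneg2 : forall p, (-2) ^ p = (-1) ^ p * 2 ^ p)
    by (intros p; rewrite <- Rpow_mult_distr; f_equal; ring).
  rewrite Hneg2.
  (* odd Taylor coefficients vanish; even ones reduce to a bound on [2 ^ m] *)
  destruct (Nat.Even_or_Odd m) as [[k ->]|[k ->]].
  - rewrite pow_1_even; lra.
  - rewrite Nat.add_1_r, pow_1_odd.
    destruct k as [|[|k]]; [simpl; lra..|].
    pose proof (pow2_ge_binomial_sum (S (2 * S (S k)))) as H.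
    rewrite !S_INR, mult_INR, !S_INR in *; pose proof (pos_INR k).
    set (p := 2 ^ S (2 * S (S k))) in *; simpl in H; rewrite ?INR_0 in *.
    nra.
Qed.

Lemma slack_lower_sym_derive t : 0 < t ->
  is_derive slack_lower_sym t
    ((exp t * (t - 2) + t + 2) * (exp t * exp t * exp_poly_eval slack_lower_sym_certificate t)
     / (Nf t ^ 2 * Mf t ^ 2 * Kf t)).
Proof.
  intros Ht; pose proof (Kf_pos t Ht); pose proof (Nf_pos t Ht); pose proof (Mf_pos t Ht).
  unfold slack_lower_sym; unfold Kf, Nf, Mf in *; auto_derive.
  - repeat split; try lra; apply Rmult_integral_contrapositive; split; lra.
  - unfold slack_lower_sym_certificate; simpl; simpl_exp.
    field; repeat split; try lra; apply Rgt_not_eq, exp_pos.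
Qed.

Lemma sq_Kf_div_NM_ge t : 0 < t < 1 -> 4 - 48 * t <= t ^ 2 * Kf t ^ 2 / (Nf t * Mf t).
Proof.
  intros Ht.
  pose proof (Kf_pos t ltac:(lra)); pose proof (Nf_pos t ltac:(lra));
    pose proof (Mf_pos t ltac:(lra)).
  pose proof (Nf_le t ltac:(lra)); pose proof (Mf_le t ltac:(lra)).
  pose proof (Kf_ge t); pose proof (exp_le_3_of_le_1 t ltac:(lra)).
  pose proof (pow_lt t 2 ltac:(lra)) as Ht2; pose proof (pow_le t 3 ltac:(lra)).
  assert (HN : Nf t <= t ^ 2 / 2 * (1 + 6 * t)) by (simpl in *; nra).
  assert (HM : Mf t <= t ^ 2 / 2 * (1 + 6 * t)) by (simpl in *; nra).
  apply Rmult_le_reg_r with (Nf t * Mf t); [apply Rmult_lt_0_compat; lra|].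
  unfold Rdiv; rewrite Rmult_assoc, Rinv_l, Rmult_1_r
    by (apply Rgt_not_eq, Rmult_lt_0_compat; lra).
  assert (HNM : Nf t * Mf t <= (t ^ 2 / 2 * (1 + 6 * t)) ^ 2)
    by (simpl; apply Rmult_le_compat; lra).
  assert (HKK : t ^ 2 <= Kf t ^ 2) by (simpl; apply Rmult_le_compat; lra).
  destruct (Rle_lt_dec (4 - 48 * t) 0) as [Hn|Hp].
  - pose proof (Rmult_le_pos _ _ (Rlt_le _ _ Ht2) (pow_le (Kf t) 2 ltac:(lra))).
    assert (0 <= Nf t * Mf t) by (apply Rmult_le_pos; lra); nra.
  - apply Rle_trans with ((4 - 48 * t) * (t ^ 2 / 2 * (1 + 6 * t)) ^ 2);
      [apply Rmult_le_compat_l; lra|].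
    apply Rle_trans with (t ^ 2 * t ^ 2); [|apply Rmult_le_compat_l; lra].
    replace ((4 - 48 * t) * (t ^ 2 / 2 * (1 + 6 * t)) ^ 2)
      with (t ^ 2 * t ^ 2 * ((1 - 12 * t) * (1 + 6 * t) ^ 2)) by (simpl; field).
    assert ((1 - 12 * t) * (1 + 6 * t) ^ 2 <= 1) by (simpl; nra).
    pose proof (Rmult_lt_0_compat _ _ Ht2 Ht2); nra.
Qed.

Lemma slack_lower_sym_ge_linear t : 0 < t < 1 -> - 100 * t <= slack_lower_sym t.
Proof.
  intros Ht; unfold slack_lower_sym.
  pose proof (Kf_pos t ltac:(lra)); pose proof (Nf_pos t ltac:(lra));
    pose proof (Mf_pos t ltac:(lra)).
  pose proof (sq_Kf_div_NM_ge t Ht).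
  pose proof (Nf_ge t ltac:(lra)); pose proof (Mf_ge t ltac:(lra)).
  pose proof (Kf_le_quadratic t ltac:(lra)); pose proof (exp_le_3_of_le_1 t ltac:(lra)).
  pose proof (pow_lt t 2 ltac:(lra)).
  assert (HN : ln (t ^ 2 / 2) <= ln (Nf t)) by (apply ln_le; lra).
  assert (HM : ln (t ^ 2 / 2) <= ln (Mf t)) by (apply ln_le; lra).
  assert (HK : ln (Kf t) <= ln t + ln (1 + 3 * t)).
  { rewrite <- ln_mult by lra; apply ln_le; [lra|simpl in *; nra]. }
  rewrite ln_sq_half in HN, HM by lra.
  pose proof (ln_le_sub1 (1 + 3 * t) ltac:(lra)); pose proof ln_4; lra.
Qed.

Lemma slack_lower_sym_nonneg g : 0 < g -> 0 <= slack_lower_sym g.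
Proof.
  intros Hg.
  apply (nonneg_of_derive_nonneg slack_lower_sym
    (fun t => (exp t * (t - 2) + t + 2)
              * (exp t * exp t * exp_poly_eval slack_lower_sym_certificate t)
              / (Nf t ^ 2 * Mf t ^ 2 * Kf t))
    100 g Hg); [lra|apply slack_lower_sym_derive| |].
  - intros t Ht; pose proof (Kf_pos t Ht); pose proof (Nf_pos t Ht); pose proof (Mf_pos t Ht).
    pose proof (exp_pos t).
    apply Rdiv_le_0_compat.
    + apply Rmult_le_pos; [apply exp_mul_sub2_ge; lra|].
      apply Rmult_le_pos; [nra|].
      apply exp_poly_eval_nonneg; [lra|apply slack_lower_sym_certificate_coef].
    + repeat apply Rmult_lt_0_compat; try apply pow_lt; lra.
  - intros t Ht; apply slack_lower_sym_ge_linear; lra.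
Qed.

(** * Inverting phi *)

Lemma continuous_phi t : 0 < t -> continuity_pt phi t.
Proof.
  intros Ht; pose proof (Kf_pos t Ht); unfold Kf in *.
  apply continuity_pt_filterlim, (ex_derive_continuous phi).
  unfold phi; auto_derive; apply Rgt_not_eq, Rmult_lt_0_compat; lra.
Qed.

Lemma phi_ge_near0 g : 0 < g <= 1 -> 1 / 2 - 3 * g <= phi g.
Proof.
  intros Hg; rewrite phi_Kf_Nf.
  pose proof (Kf_pos g ltac:(lra)); pose proof (Nf_ge g ltac:(lra)).
  pose proof (Kf_le_quadratic g ltac:(lra)); pose proof (exp_le_3_of_le_1 g ltac:(lra)).
  pose proof (pow_le g 2 ltac:(lra)).
  assert (HK : Kf g <= g * (1 + 3 * g)) by (simpl in *; nra).
  assert (HK2 : 0 < Kf g ^ 2) by (apply pow_lt; lra).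
  apply Rmult_le_reg_r with (Kf g ^ 2); [lra|].
  unfold Rdiv; rewrite Rmult_assoc, Rinv_l, Rmult_1_r by lra.
  destruct (Rle_lt_dec (1 / 2 - 3 * g) 0) as [Hn|Hp]; [nra|].
  apply Rle_trans with ((1 / 2 - 3 * g) * (g * (1 + 3 * g)) ^ 2).
  - apply Rmult_le_compat_l; [lra|]; simpl; apply Rmult_le_compat; lra.
  - replace ((1 / 2 - 3 * g) * (g * (1 + 3 * g)) ^ 2)
      with (g ^ 2 / 2 * ((1 - 6 * g) * (1 + 3 * g) ^ 2)) by (simpl; field).
    assert ((1 - 6 * g) * (1 + 3 * g) ^ 2 <= 1) by (simpl; nra).
    nra.
Qed.

Lemma phi_le_large g : 1 <= g -> phi g <= 8 / g.
Proof.
  intros Hg; rewrite phi_Kf_Nf.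
  pose proof (Mf_ge g ltac:(lra)); pose proof (exp_ineq1_le g); pose proof (exp_pos g).
  unfold Mf, Kf, Nf in *.
  assert (HK : exp g / 2 <= exp g - 1) by (simpl in *; nra).
  assert (HK2 : (exp g / 2) ^ 2 <= (exp g - 1) ^ 2) by (simpl; apply Rmult_le_compat; lra).
  assert (HN : exp g * (g - 1) + 1 <= g * exp g) by nra.
  assert (0 < (exp g / 2) ^ 2) by (apply pow_lt; lra).
  apply Rle_trans with (g * exp g / (exp g / 2) ^ 2).
  - unfold Rdiv; apply Rmult_le_compat; [nra|left; apply Rinv_0_lt_compat; lra|lra|].
    apply Rinv_le_contravar; lra.
  - replace (g * exp g / (exp g / 2) ^ 2) with (4 * g / exp g) by (simpl; field; lra).
    apply Rmult_le_reg_r with (exp g * g); [nra|].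
    replace (4 * g / exp g * (exp g * g)) with (4 * g * g) by (field; lra).
    replace (8 / g * (exp g * g)) with (8 * exp g) by (field; lra).
    simpl in *; nra.
Qed.

Lemma phi_surjective x : 0 < x < 1 / 2 -> exists g, 0 < g /\ x = phi g.
Proof.
  intros Hx.
  set (g0 := Rmin 1 ((1 / 2 - x) / 6)); set (g1 := 1 + 8 / x).
  assert (Hg0 : 0 < g0 <= 1) by (split; [apply Rmin_glb_lt; lra|apply Rmin_l]).
  assert (Hg0x : g0 <= (1 / 2 - x) / 6) by apply Rmin_r.
  assert (H8 : 0 < 8 / x) by (apply Rdiv_lt_0_compat; lra).
  assert (Hphi0 : x < phi g0) by (pose proof (phi_ge_near0 g0 Hg0); lra).
  assert (Hphi1 : phi g1 < x).
  { pose proof (phi_le_large g1 ltac:(unfold g1; lra)).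
    assert (8 / g1 < x); [|lra].
    apply Rmult_lt_reg_r with g1; [unfold g1; lra|].
    unfold Rdiv; rewrite Rmult_assoc, Rinv_l, Rmult_1_r by (unfold g1; lra).
    unfold g1; replace (x * (1 + 8 / x)) with (x + 8) by (field; lra); lra. }
  destruct (Ranalysis5.IVT_interv (fun g => x - phi g) g0 g1) as [z [Hz Hfz]];
    [|unfold g1; lra|lra|lra|exists z; split; lra].
  intros a Ha; apply continuity_pt_minus; [apply continuity_pt_const; intros ? ?; reflexivity|].
  apply continuous_phi; lra.
Qed.

Lemma gamma_of_spec x : 0 < x < 1 / 2 -> 0 < gamma_of x /\ x = phi (gamma_of x).
Proof. intros Hx; unfold gamma_of; apply epsilon_spec, phi_surjective, Hx. Qed.

Lemma G_inv_gamma x : 0 < x < 1 / 2 -> G (1 / x) = G_gamma (gamma_of x).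
Proof.
  intros Hx; unfold G; destruct (Req_EM_T (1 / x) 2) as [He|Hne].
  - exfalso; apply Rmult_eq_compat_r with (r := x) in He.
    unfold Rdiv in He; rewrite Rmult_assoc, Rinv_l, Rmult_1_r in He by lra; lra.
  - replace (1 / (1 / x)) with x by (field; lra); reflexivity.
Qed.

Lemma G_inv_half : G (1 / (1 / 2)) = 2.
Proof.
  replace (1 / (1 / 2)) with 2 by field.
  unfold G; destruct (Req_EM_T 2 2); [reflexivity|lra].
Qed.

Lemma G_inv_ge x : 0 < x <= 1 / 2 -> 2 + ln (1 / (2 * x)) <= G (1 / x).
Proof.
  intros Hx; destruct (Req_dec x (1 / 2)) as [->|Hne].
  - rewrite G_inv_half; replace (1 / (2 * (1 / 2))) with 1 by field; rewrite ln_1; lra.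
  - destruct (gamma_of_spec x ltac:(lra)) as [Hg Hphi].
    rewrite G_inv_gamma by lra; set (g := gamma_of x) in *.
    rewrite Hphi, ln_inv_2phi_eq by exact Hg.
    pose proof (slack_lower_nonneg _ Hg); unfold slack_lower in *; lra.
Qed.

Lemma G_inv_le x : 0 < x <= 1 / 2 -> G (1 / x) <= 2 + 5 / 2 * ln (1 / (2 * x)).
Proof.
  intros Hx; destruct (Req_dec x (1 / 2)) as [->|Hne].
  - rewrite G_inv_half; replace (1 / (2 * (1 / 2))) with 1 by field; rewrite ln_1; lra.
  - destruct (gamma_of_spec x ltac:(lra)) as [Hg Hphi].
    rewrite G_inv_gamma by lra; set (g := gamma_of x) in *.
    rewrite Hphi, ln_inv_2phi_eq by exact Hg.
    pose proof (slack_upper_nonneg _ Hg); unfold slack_upper in *; lra.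
Qed.

Lemma G_inv_ge_sym x : 0 < x <= 1 / 2 ->
  (1 - x) * (4 + ln (1 / (4 * x * (1 - x)))) <= G (1 / x).
Proof.
  intros Hx; destruct (Req_dec x (1 / 2)) as [->|Hne].
  - rewrite G_inv_half; replace (1 / (4 * (1 / 2) * (1 - 1 / 2))) with 1 by field.
    rewrite ln_1; lra.
  - destruct (gamma_of_spec x ltac:(lra)) as [Hg Hphi].
    rewrite G_inv_gamma by lra; set (g := gamma_of x) in *.
    pose proof (Kf_pos g Hg); pose proof (Nf_pos g Hg); pose proof (Mf_pos g Hg).
    pose proof (exp_pos g).
    assert (Hx1 : 1 - x = exp g * Mf g / Kf g ^ 2) by (rewrite Hphi; apply one_sub_phi, Hg).
    assert (HG : G_gamma g = (1 - x) * (g ^ 2 * Kf g ^ 2 / (Nf g * Mf g))).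
    { rewrite Hx1; unfold G_gamma; field; repeat split; lra. }
    assert (Hln : ln (1 / (4 * x * (1 - x)))
                  = - ln 4 - ln (Nf g) - g - ln (Mf g) + 4 * ln (Kf g)).
    { assert (Hlnx : ln x = ln (Nf g) - 2 * ln (Kf g)).
      { pose proof (ln_inv_phi g Hg) as Hl; rewrite <- Hphi, ln_div, ln_1 in Hl by lra; lra. }
      assert (Hln1x : ln (1 - x) = g + ln (Mf g) - 2 * ln (Kf g)).
      { rewrite Hx1, ln_div, ln_mult, ln_exp, ln_pow
          by (try apply Rmult_lt_0_compat; try apply pow_lt; lra).
        simpl; ring. }
      rewrite ln_div, ln_1, !ln_mult by nra; lra. }
    rewrite HG, Hln; apply Rmult_le_compat_l; [lra|].
    pose proof (slack_lower_sym_nonneg g Hg); unfold slack_lower_sym in *; lra.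
Qed.

Lemma G_inv_le_log2 x : 0 < x <= 1 / 2 -> G (1 / x) <= 2 * log2 (1 / x).
Proof.
  intros Hx; pose proof (G_inv_le x Hx); pose proof ln_2_pos; pose proof ln_2_le.
  assert (Ha : ln (1 / (2 * x)) = ln (1 / x) - ln 2).
  { replace (1 / (2 * x)) with (1 / x / 2) by (field; lra).
    apply ln_div; [apply Rdiv_lt_0_compat|]; lra. }
  assert (Hpos : 0 <= ln (1 / (2 * x))) by (apply ln_inv_nonneg; lra).
  unfold log2; apply Rmult_le_reg_r with (ln 2); [lra|].
  replace (2 * (ln (1 / x) / ln 2) * ln 2) with (2 * ln (1 / x)) by (field; lra).
  (* [2 + 5/2 a <= 2 (a + ln 2) / ln 2] for [a = ln (1 / (2 x)) >= 0] as [ln 2 <= 4/5] *)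
  assert (0 <= (2 - 5 / 2 * ln 2) * ln (1 / (2 * x))) by (apply Rmult_le_pos; lra).
  nra.
Qed.

Lemma log2_inv_le_sym x : 0 < x <= 1 / 2 ->
  2 * x * log2 (1 / x) <= 4 * x * (1 - x) * log2 (1 / (x * (1 - x))).
Proof.
  intros Hx; pose proof ln_2_pos.
  assert (Ha : 0 <= ln (1 / x)) by (apply ln_inv_nonneg; lra).
  assert (Hb : 0 <= ln (1 / (1 - x))) by (apply ln_inv_nonneg; lra).
  replace (1 / (x * (1 - x))) with (1 / x * (1 / (1 - x))) by (field; lra).
  unfold log2; rewrite ln_mult by (apply Rdiv_lt_0_compat; lra).
  apply Rmult_le_reg_r with (ln 2); [lra|].
  replace (2 * x * (ln (1 / x) / ln 2) * ln 2) with (2 * x * ln (1 / x)) by (field; lra).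
  replace (4 * x * (1 - x) * ((ln (1 / x) + ln (1 / (1 - x))) / ln 2) * ln 2)
    with (4 * x * (1 - x) * (ln (1 / x) + ln (1 / (1 - x)))) by (field; lra).
  assert (0 <= x * (1 - 2 * x) * ln (1 / x)) by (apply Rmult_le_pos; [nra|lra]).
  assert (0 <= x * (1 - x) * ln (1 / (1 - x))) by (apply Rmult_le_pos; [nra|lra]).
  nra.
Qed.

(** * Asymptotics *)

Lemma phi_ge_exp g : 0 < g -> / (2 * exp g ^ 2) <= phi g.
Proof.
  intros Hg; rewrite phi_Kf_Nf.
  pose proof (Kf_pos g Hg); pose proof (Nf_ge g ltac:(lra)); pose proof (Kf_le g).
  pose proof (exp_pos g); pose proof (pow_lt (Kf g) 2 ltac:(lra)).
  pose proof (pow_lt (exp g) 2 ltac:(lra)).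
  apply Rmult_le_reg_r with (2 * exp g ^ 2 * Kf g ^ 2); [nra|].
  replace (/ (2 * exp g ^ 2) * (2 * exp g ^ 2 * Kf g ^ 2)) with (Kf g ^ 2) by (field; lra).
  replace (Nf g / Kf g ^ 2 * (2 * exp g ^ 2 * Kf g ^ 2)) with (2 * exp g ^ 2 * Nf g)
    by (field; lra).
  assert (Kf g ^ 2 <= (g * exp g) ^ 2) by (simpl; apply Rmult_le_compat; lra).
  replace ((g * exp g) ^ 2) with (exp g ^ 2 * g ^ 2) in * by ring.
  nra.
Qed.

Lemma gamma_of_gt x s : 0 < x < 1 / 2 -> x < / (2 * exp s ^ 2) -> s < gamma_of x.
Proof.
  intros Hx Hxs; destruct (gamma_of_spec x Hx) as [Hg Hphi].
  destruct (Rlt_le_dec s (gamma_of x)) as [Hlt|Hle]; [exact Hlt|exfalso].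
  pose proof (phi_ge_exp _ Hg); rewrite <- Hphi in H.
  assert (Hexp : exp (gamma_of x) <= exp s).
  { destruct (Req_dec (gamma_of x) s) as [->|]; [lra|left; apply exp_increasing; lra]. }
  assert (/ (2 * exp s ^ 2) <= / (2 * exp (gamma_of x) ^ 2)); [|lra].
  pose proof (exp_pos (gamma_of x)).
  apply Rinv_le_contravar; [pose proof (pow_lt (exp (gamma_of x)) 2); lra|].
  simpl; apply Rmult_le_compat_l; [lra|]; apply Rmult_le_compat; lra.
Qed.

Lemma ln_inv_lt_G_inv x : 0 < x < 1 / 2 -> ln (1 / x) < G (1 / x).
Proof.
  intros Hx; pose proof (G_inv_ge x ltac:(lra)); pose proof ln_2_le.
  replace (1 / (2 * x)) with (1 / x / 2) in H by (field; lra).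
  rewrite ln_div in H by (try apply Rdiv_lt_0_compat; lra); lra.
Qed.

Lemma ln_le_2sqrt g : 0 < g -> ln g <= 2 * sqrt g.
Proof.
  intros Hg; pose proof (sqrt_lt_R0 g Hg).
  rewrite <- (sqrt_sqrt g) at 1 by lra; rewrite ln_mult by lra.
  pose proof (ln_le_sub1 (sqrt g) ltac:(lra)); lra.
Qed.

Lemma G_gamma_le_ratio g : 1 < g -> G_gamma g <= g * g / (g - 1).
Proof.
  intros Hg; pose proof (Nf_pos g ltac:(lra)); pose proof (exp_pos g).
  assert (HN : exp g * (g - 1) <= Nf g) by (unfold Nf; lra).
  unfold G_gamma; apply Rmult_le_reg_r with (Nf g * (g - 1)); [nra|].
  replace (g ^ 2 * exp g / Nf g * (Nf g * (g - 1))) with (g * g * (exp g * (g - 1)))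
    by (simpl; field; lra).
  replace (g * g / (g - 1) * (Nf g * (g - 1))) with (g * g * Nf g) by (field; lra).
  apply Rmult_le_compat_l; nra.
Qed.

Lemma ln_inv_phi_ge g : 1 <= g -> g - 2 * ln 2 - ln g <= ln (1 / phi g).
Proof.
  intros Hg; rewrite ln_inv_phi by lra.
  pose proof (Kf_pos g ltac:(lra)); pose proof (Nf_pos g ltac:(lra)); pose proof (exp_pos g).
  pose proof (Mf_ge g ltac:(lra)); unfold Mf in *; simpl in *.
  assert (HK : ln (exp g / 2) <= ln (Kf g)) by (apply ln_le; unfold Kf; nra).
  assert (HN : ln (Nf g) <= ln (g * exp g)) by (apply ln_le; unfold Nf; nra).
  rewrite ln_div, ln_exp in HK by lra; rewrite ln_mult, ln_exp in HN by lra; lra.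
Qed.

Lemma quartic_ratio_le e s : 0 < e -> 5 * (1 + e) / e + 2 < s ->
  s * s * (s * s) / (s * s - 1) <= (1 + e) * (s * s - 2 * s - 2).
Proof.
  intros He Hs.
  assert (HeS : 5 * (1 + e) < e * (s - 2)).
  { apply Rmult_lt_compat_l with (r := e) in Hs; [|lra].
    replace (e * (5 * (1 + e) / e + 2)) with (5 * (1 + e) + 2 * e) in Hs by (field; lra); lra. }
  assert (Hs7 : 7 < s) by nra.
  apply Rmult_le_reg_r with (s * s - 1); [nra|].
  replace (s * s * (s * s) / (s * s - 1) * (s * s - 1)) with (s * s * (s * s)) by (field; nra).
  assert (Hkey : 5 * (1 + e) * (s * s * s) <= e * (s * s * s * s)).
  { pose proof (Rmult_lt_0_compat (s * s) s ltac:(nra) ltac:(lra)); nra. }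
  replace ((1 + e) * (s * s - 2 * s - 2) * (s * s - 1))
    with ((1 + e) * (s * s * s * s - 2 * (s * s * s) - 3 * (s * s) + 2 * s + 2)) by ring.
  assert (s * s <= s * s * s) by nra.
  nra.
Qed.

Lemma G_gamma_le_ln_inv_phi e g : 0 < e -> (5 * (1 + e) / e + 2) ^ 2 < g ->
  G_gamma g <= (1 + e) * ln (1 / phi g).
Proof.
  intros He Hg.
  assert (HS : 7 < 5 * (1 + e) / e + 2).
  { assert (5 < 5 * (1 + e) / e); [|lra].
    apply Rmult_lt_reg_r with e; [lra|].
    unfold Rdiv; rewrite Rmult_assoc, Rinv_l by lra; lra. }
  assert (Hg49 : 49 < g) by (simpl in Hg; nra).
  pose proof (ln_inv_phi_ge g ltac:(lra)); pose proof (ln_le_2sqrt g ltac:(lra)).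
  pose proof ln_2_le.
  set (s := sqrt g) in *.
  assert (Hss : s * s = g) by (apply sqrt_sqrt; lra).
  assert (Hs : 5 * (1 + e) / e + 2 < s).
  { destruct (Rle_lt_dec s (5 * (1 + e) / e + 2)) as [Hle|]; [|lra].
    assert (0 <= s) by apply sqrt_pos.
    simpl in Hg; nra. }
  apply Rle_trans with (g * g / (g - 1)); [apply G_gamma_le_ratio; lra|].
  apply Rle_trans with ((1 + e) * (s * s - 2 * s - 2)).
  - rewrite <- Hss; apply quartic_ratio_le; lra.
  - apply Rmult_le_compat_l; lra.
Qed.

Lemma G_inv_le_ln_inv e x : 0 < e -> 0 < x < 1 / 2 ->
  x < / (2 * exp ((5 * (1 + e) / e + 2) ^ 2) ^ 2) -> G (1 / x) <= (1 + e) * ln (1 / x).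
Proof.
  intros He Hx Hxs; destruct (gamma_of_spec x Hx) as [Hg Hphi].
  rewrite G_inv_gamma by exact Hx; rewrite Hphi at 2.
  apply G_gamma_le_ln_inv_phi, gamma_of_gt; assumption.
Qed.

Lemma G_inv_div_ln_inv_cvg :
  filterlim (fun x => G (1 / x) / ln (1 / x)) (at_right 0) (locally 1).
Proof.
  apply filterlim_locally; intros [eps Heps]; simpl.
  set (e := eps / 2); assert (He : 0 < e) by (unfold e; lra).
  set (t := / (2 * exp ((5 * (1 + e) / e + 2) ^ 2) ^ 2)).
  assert (Ht : 0 < t).
  { apply Rinv_0_lt_compat, Rmult_lt_0_compat; [lra|]; apply pow_lt, exp_pos. }
  assert (Hd : 0 < Rmin (1 / 4) t) by (apply Rmin_glb_lt; lra).
  exists (mkposreal _ Hd); intros x Hxd Hx0; simpl in Hxd.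
  unfold ball in Hxd; simpl in Hxd; unfold AbsRing_ball, abs, minus, plus, opp in Hxd;
    simpl in Hxd; rewrite Ropp_0, Rplus_0_r, Rabs_pos_eq in Hxd by lra.
  pose proof (Rmin_l (1 / 4) t); pose proof (Rmin_r (1 / 4) t).
  assert (Hx : 0 < x < 1 / 2) by lra.
  assert (Hxt : x < t) by lra.
  pose proof (G_inv_le_ln_inv e x He Hx Hxt) as Hupper.
  pose proof (ln_inv_lt_G_inv x Hx) as Hlower.
  assert (Hln : 0 < ln (1 / x)).
  { rewrite ln_div, ln_1 by lra; pose proof (ln_increasing x 1 ltac:(lra) ltac:(lra)).
    rewrite ln_1 in *; lra. }
  unfold ball; simpl; unfold AbsRing_ball, abs, minus, plus, opp; simpl.
  assert (Hratio : 1 < G (1 / x) / ln (1 / x) <= 1 + e).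
  { unfold Rdiv; split.
    - apply Rmult_lt_reg_r with (ln (1 / x)); [lra|].
      rewrite Rmult_assoc, Rinv_l by lra; lra.
    - apply Rmult_le_reg_r with (ln (1 / x)); [lra|].
      rewrite Rmult_assoc, Rinv_l by lra; lra. }
  rewrite Rabs_pos_eq; unfold e in *; lra.
Qed.

Theorem corollary3p1 :
  (forall x : R, 0 < x <= 1 / 2 ->
     4 * x * (1 - x) * log2 (1 / (x * (1 - x))) >= x * G (1 / x) /\
     x * G (1 / x) >= x * (1 - x) * (4 + ln (1 / (4 * x * (1 - x)))) /\
     2 * x * log2 (1 / x) >= x * G (1 / x) /\
     x * G (1 / x) >= x * (2 + ln (1 / (2 * x)))) /\
  filterlim (fun x => G (1 / x) / ln (1 / x)) (at_right 0) (locally 1).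
Proof.
  split; [|exact G_inv_div_ln_inv_cvg].
  intros x Hx.
  pose proof (G_inv_ge x Hx); pose proof (G_inv_ge_sym x Hx).
  pose proof (G_inv_le_log2 x Hx); pose proof (log2_inv_le_sym x Hx).
  assert (Hlog : x * G (1 / x) <= 2 * x * log2 (1 / x)).
  { replace (2 * x * log2 (1 / x)) with (x * (2 * log2 (1 / x))) by ring.
    apply Rmult_le_compat_l; lra. }
  repeat split; apply Rle_ge; try lra.
  - replace (x * (1 - x) * (4 + ln (1 / (4 * x * (1 - x)))))
      with (x * ((1 - x) * (4 + ln (1 / (4 * x * (1 - x)))))) by ring.
    apply Rmult_le_compat_l; lra.
  - apply Rmult_le_compat_l; lra.
Qed.
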